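(* For real parameters $p,r$, the Gini mean $G_{p,r}$ is stable if and only if $pr(p+r)=0$; i.e. the only stable Gini means are the power means $G_{0,r}=B_r$, $G_{p,0}=B_p$, $G_{p,-p}=B_0$.
   Context: For $s,t>0$: $G_{p,r}(s,t)=\big(\frac{s^p+t^p}{s^r+t^r}\big)^{1/(p-r)}$ if $p\ne r$; $\exp\big(\frac{s^p\log s+t^p\log t}{s^p+t^p}\big)$ if $p=r\ne0$; $\sqrt{st}$ if $p=r=0$. Power mean: $B_r(s,t)=\big(\frac{s^r+t^r}2\big)^{1/r}$ for $r\ne0$, $B_0(s,t)=\sqrt{st}$. A mean $M$ is stable if $M(s,t)=M\big(M(s,M(s,t)),M(M(s,t),t)\big)$ for all $s,t>0$. *)

From Stdlib Require Import Reals.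
Open Scope R_scope.

Definition Gini (p r : R) (s t : R) : R :=
  if Req_EM_T p r then
    (if Req_EM_T p 0 then sqrt (s * t)
     else exp ((Rpower s p * ln s + Rpower t p * ln t) / (Rpower s p + Rpower t p)))
  else Rpower ((Rpower s p + Rpower t p) / (Rpower s r + Rpower t r)) (1 / (p - r)).

Definition stable (M : R -> R -> R) : Prop :=
  forall s t : R, 0 < s -> 0 < t ->
    M s t = M (M s (M s t)) (M (M s t) t).

From Stdlib Require Import Reals Lra Psatz.
Open Scope R_scope.

(* In logarithmic coordinates s = e^a, t = e^b every Gini mean reads
   G_{p,r}(e^a, e^b) = exp (a + gini_profile p r (b - a)), so stability of G_{p,r}
   is equivalent to the one-variable functional equation [stable_profile] for the
   profile f = gini_profile p r:   f u = f (f u) + f (f u + f (u - f u) - f (f u)).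

   Sufficiency: if p r (p + r) = 0 the profile is v/2 (geometric mean) or the profile
   (ln ((1 + e^(q v))/2))/q of the power mean B_q, and both satisfy the equation.

   Necessity: since f_{-p,-r}(v) = - f_{p,r}(-v) and the equation is invariant under
   this reflection, it suffices to treat two sign patterns.
   - p > 0 > r, p + r <> 0: f v = a v + O(1) on v >= 0 with slope a = p/(p-r) <> 1/2;
     evaluating the equation at a large u forces a (1-a)(1-2a) = 0
     ([not_stable_linear_growth]).
   - p, r < 0: f v = v/2 + O(v^2) near 0, while f decays like 1/u at infinity and is
     almost constant on intervals of length f u there; at such a u the equation would
     give m = f m + f w with w close to 3m/2, i.e. m close to 5m/4
     ([not_stable_half_slope], fed by [tail_criterion]). *)

Lemma ln_le x y : 0 < x -> x <= y -> ln x <= ln y.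
Proof.
  intros Hx Hxy. destruct (Rle_lt_or_eq_dec _ _ Hxy) as [Hlt | ->].
  - left; apply ln_increasing; assumption.
  - apply Rle_refl.
Qed.

Lemma ln_le_sub1 x : 0 < x -> ln x <= x - 1.
Proof. intros Hx. pose proof (exp_ineq1_le (ln x)) as H. rewrite exp_ln in H; lra. Qed.

Lemma exp_ge1 x : 0 <= x -> 1 <= exp x.
Proof. intros Hx. pose proof (exp_ineq1_le x). lra. Qed.

Lemma exp_le1 x : x <= 0 -> exp x <= 1.
Proof.
  intros Hx. pose proof (exp_ineq1_le (- x)) as H. rewrite exp_Ropp in H.
  pose proof (exp_pos x) as Hpos.
  assert (Hinv : exp x * / exp x = 1) by (apply Rinv_r; lra).
  nra.
Qed.

Lemma exp_quadratic_upper x : x <= 1/2 -> exp x <= 1 + x + 2 * x ^ 2.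
Proof.
  intros Hx. pose proof (exp_ineq1_le (- x)) as H. rewrite exp_Ropp in H.
  pose proof (exp_pos x) as Hpos.
  assert (Hinv : exp x * / exp x = 1) by (apply Rinv_r; lra).
  assert (Hprod : exp x * (1 - x) <= 1) by nra.
  assert (Hcube : 1 <= (1 + x + 2 * x ^ 2) * (1 - x)) by nra.
  nra.
Qed.

Lemma exp_decay1 x : x <= 0 -> - x * exp x <= 1.
Proof.
  intros Hx. pose proof (exp_ineq1_le (- x)) as H. rewrite exp_Ropp in H.
  pose proof (exp_pos x) as Hpos.
  assert (Hinv : exp x * / exp x = 1) by (apply Rinv_r; lra).
  nra.
Qed.

Lemma exp_decay2 x : x <= 0 -> x ^ 2 * exp x <= 4.
Proof.
  intros Hx.
  pose proof (exp_ineq1_le (- x / 2)) as H.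
  assert (Hsq : exp (- x) = exp (- x / 2) * exp (- x / 2))
    by (rewrite <- exp_plus; f_equal; field).
  assert (Hprod : exp x * exp (- x) = 1)
    by (rewrite <- exp_plus, Rplus_opp_r; apply exp_0).
  pose proof (exp_pos x).
  assert (Hbig : x ^ 2 / 4 <= exp (- x)) by (rewrite Hsq; nra).
  nra.
Qed.

Lemma exp_rate_bound x u : x <= 0 -> 0 < u -> - x * exp (x * u) <= 1 / u.
Proof.
  intros Hx Hu. pose proof (exp_decay1 (x * u) ltac:(nra)).
  apply Rmult_le_reg_r with u; [assumption|].
  replace (1 / u * u) with 1 by (field; lra). nra.
Qed.

Lemma div_bounds N L Q : 0 < Q -> -L <= N <= L -> -(L / Q) <= N / Q <= L / Q.
Proof.
  intros HQ HN. pose proof (Rinv_0_lt_compat Q HQ). unfold Rdiv. split; nra.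
Qed.

Lemma scaled_bound k e D : -1 <= k <= 1 -> -D <= e <= D -> -D <= k * e <= D.
Proof. intros. split; nra. Qed.

Definition softplus (x : R) : R := ln (1 + exp x).

Lemma softplus_arg_pos x : 0 < 1 + exp x.
Proof. pose proof (exp_pos x); lra. Qed.

Lemma softplus_lt x y : x < y -> softplus x < softplus y.
Proof.
  intros Hxy. apply ln_increasing; [apply softplus_arg_pos|].
  pose proof (exp_increasing _ _ Hxy); lra.
Qed.

Lemma softplus_bounds x : 0 <= softplus x <= exp x.
Proof.
  pose proof (exp_pos x). unfold softplus. split.
  - rewrite <- ln_1. apply ln_le; lra.
  - pose proof (ln_le_sub1 (1 + exp x) (softplus_arg_pos x)). lra.
Qed.

Lemma softplus_0 : softplus 0 = ln 2.
Proof. unfold softplus. rewrite exp_0. replace (1 + 1) with 2 by ring. reflexivity. Qed.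

Lemma softplus_reflect x : softplus x - softplus (- x) = x.
Proof.
  unfold softplus.
  assert (E : 1 + exp x = exp x * (1 + exp (- x))).
  { rewrite Rmult_plus_distr_l, Rmult_1_r, <- exp_plus, Rplus_opp_r, exp_0. ring. }
  rewrite E, ln_mult, ln_exp by (try apply exp_pos; apply softplus_arg_pos). ring.
Qed.

Lemma softplus_nonpos_arg x : x <= 0 -> softplus x <= ln 2.
Proof. intros Hx. apply ln_le; [apply softplus_arg_pos|]. pose proof (exp_le1 x Hx); lra. Qed.

Lemma softplus_nonneg_arg x : 0 <= x -> 0 <= softplus x - x <= ln 2.
Proof.
  intros Hx. pose proof (softplus_reflect x).
  pose proof (softplus_bounds (- x)). pose proof (softplus_nonpos_arg (- x)). lra.
Qed.

Lemma softplus_near0 x : -1 <= x <= 1 -> 0 <= softplus x - ln 2 - x / 2 <= x ^ 2 / 2.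
Proof.
  intros Hx. set (y := x / 2). set (c := (exp y + exp (- y)) / 2).
  assert (Hfac : 1 + exp x = 2 * (c * exp y)).
  { unfold c. replace x with (y + y) by (unfold y; field).
    rewrite exp_plus.
    assert (Hinv : exp (- y) * exp y = 1) by (rewrite <- exp_plus, Rplus_opp_l; apply exp_0).
    lra. }
  assert (Hc1 : 1 <= c).
  { unfold c. pose proof (exp_ineq1_le y). pose proof (exp_ineq1_le (- y)). lra. }
  assert (Hc2 : c <= 1 + x ^ 2 / 2).
  { unfold c. pose proof (exp_quadratic_upper y ltac:(unfold y; lra)).
    pose proof (exp_quadratic_upper (- y) ltac:(unfold y; lra)).
    unfold y in *. nra. }
  unfold softplus. rewrite Hfac, !ln_mult, ln_exp; try lra; try apply exp_pos.
  2:{ pose proof (exp_pos y); nra. }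
  pose proof (ln_le_sub1 c ltac:(lra)).
  pose proof (ln_le 1 c ltac:(lra) Hc1) as Hln. rewrite ln_1 in Hln.
  unfold y. lra.
Qed.

(* Lipschitz-type increment bound: softplus' = logistic <= exp. *)
Lemma softplus_increment x h :
  0 <= h <= 1/2 -> 0 <= softplus (x + h) - softplus x <= 2 * h * exp x.
Proof.
  intros Hh. set (y := exp x). set (k := exp h).
  assert (Hy : 0 < y) by apply exp_pos.
  assert (Hk1 : 1 <= k) by (apply exp_ge1; lra).
  assert (Hk2 : k <= 1 + 2 * h)
    by (pose proof (exp_quadratic_upper h ltac:(lra)); unfold k; nra).
  unfold softplus. rewrite exp_plus. fold y k.
  split.
  - assert (ln (1 + y) <= ln (1 + y * k)) by (apply ln_le; nra). lra.
  - assert (Hratio : ln (1 + y * k) - ln (1 + y) = ln ((1 + y * k) / (1 + y))).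
    { unfold Rdiv. rewrite ln_mult, ln_Rinv; try lra.
      - nra.
      - apply Rinv_0_lt_compat; lra. }
    rewrite Hratio.
    pose proof (ln_le_sub1 ((1 + y * k) / (1 + y)) ltac:(apply Rdiv_lt_0_compat; nra)).
    assert (Hq : (1 + y * k) / (1 + y) - 1 = y * (k - 1) / (1 + y)) by (field; lra).
    assert (y * (k - 1) / (1 + y) <= y * (k - 1)).
    { apply Rmult_le_reg_r with (1 + y); [lra|].
      replace (y * (k - 1) / (1 + y) * (1 + y)) with (y * (k - 1)) by (field; lra). nra. }
    nra.
Qed.

Definition logistic (x : R) : R := exp x / (1 + exp x).

Lemma logistic_bounds x : 0 < logistic x <= exp x.
Proof.
  unfold logistic. pose proof (exp_pos x). split.
  - apply Rdiv_lt_0_compat; lra.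
  - apply Rmult_le_reg_r with (1 + exp x); [lra|].
    replace (exp x / (1 + exp x) * (1 + exp x)) with (exp x) by (field; lra). nra.
Qed.

Lemma logistic_increment x h :
  0 <= h <= 1/2 -> 0 <= logistic (x + h) - logistic x <= 2 * h * exp x.
Proof.
  intros Hh. unfold logistic. rewrite exp_plus.
  set (y := exp x). set (k := exp h).
  assert (Hy : 0 < y) by apply exp_pos.
  assert (Hk1 : 1 <= k) by (apply exp_ge1; lra).
  assert (Hk2 : k <= 1 + 2 * h)
    by (pose proof (exp_quadratic_upper h ltac:(lra)); unfold k; nra).
  replace (y * k / (1 + y * k) - y / (1 + y))
    with (y * (k - 1) / ((1 + y * k) * (1 + y))) by (field; nra).
  split.
  - apply Rmult_le_pos; [nra | apply Rlt_le, Rinv_0_lt_compat; nra].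
  - apply Rmult_le_reg_r with ((1 + y * k) * (1 + y)); [nra|].
    replace (y * (k - 1) / ((1 + y * k) * (1 + y)) * ((1 + y * k) * (1 + y)))
      with (y * (k - 1)) by (field; nra).
    assert (y * (k - 1) <= 2 * h * y) by nra.
    assert (1 <= (1 + y * k) * (1 + y)) by nra.
    assert (0 <= 2 * h * y) by nra.
    nra.
Qed.

Lemma logistic_nonpos x : x <= 0 -> x / 2 <= logistic x - 1 / 2 <= 0.
Proof.
  intros Hx. unfold logistic. pose proof (exp_ineq1_le x). pose proof (exp_le1 x Hx).
  pose proof (exp_pos x).
  replace (exp x / (1 + exp x) - 1 / 2) with ((exp x - 1) / (2 * (1 + exp x))) by (field; lra).
  split.
  - apply Rmult_le_reg_r with (2 * (1 + exp x)); [lra|].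
    replace ((exp x - 1) / (2 * (1 + exp x)) * (2 * (1 + exp x))) with (exp x - 1) by (field; lra).
    nra.
  - apply Rmult_le_reg_r with (2 * (1 + exp x)); [lra|].
    replace ((exp x - 1) / (2 * (1 + exp x)) * (2 * (1 + exp x))) with (exp x - 1) by (field; lra).
    lra.
Qed.

Definition gini_profile (p r v : R) : R :=
  if Req_EM_T p r then
    (if Req_EM_T p 0 then v / 2 else v * exp (p * v) / (1 + exp (p * v)))
  else (softplus (p * v) - softplus (r * v)) / (p - r).

Lemma gini_profile_distinct p r v :
  p <> r -> gini_profile p r v = (softplus (p * v) - softplus (r * v)) / (p - r).
Proof. intros Hpr. unfold gini_profile. destruct (Req_EM_T p r); [contradiction | reflexivity]. Qed.

Lemma gini_profile_equal p v : p <> 0 -> gini_profile p p v = v * logistic (p * v).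
Proof.
  intros Hp. unfold gini_profile, logistic.
  destruct (Req_EM_T p p) as [_ | Hpp]; [|lra].
  destruct (Req_EM_T p 0); [contradiction|]. unfold Rdiv. ring.
Qed.

Lemma gini_profile_sym p r v : gini_profile p r v = gini_profile r p v.
Proof.
  unfold gini_profile.
  destruct (Req_EM_T p r) as [Epr | Hpr]; destruct (Req_EM_T r p); try lra.
  - subst r. reflexivity.
  - field. lra.
Qed.

Lemma gini_profile_reflect p r v : gini_profile (- p) (- r) v = - gini_profile p r (- v).
Proof.
  unfold gini_profile.
  destruct (Req_EM_T (- p) (- r)); destruct (Req_EM_T p r); try lra.
  - destruct (Req_EM_T (- p) 0); destruct (Req_EM_T p 0); try lra.
    replace (- p * v) with (p * - v) by ring.
    pose proof (exp_pos (p * - v)). field. lra.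
  - replace (- p * v) with (p * - v) by ring. replace (- r * v) with (r * - v) by ring.
    field. lra.
Qed.

Lemma Gini_exp p r a b : Gini p r (exp a) (exp b) = exp (a + gini_profile p r (b - a)).
Proof.
  unfold Gini, gini_profile. destruct (Req_EM_T p r) as [-> | Hpr].
  - destruct (Req_EM_T r 0) as [-> | Hr].
    + rewrite <- exp_plus.
      replace (a + b) with ((a + (b - a) / 2) + (a + (b - a) / 2)) by field.
      rewrite exp_plus. apply sqrt_square. left; apply exp_pos.
    + f_equal. unfold Rpower. rewrite !ln_exp.
      replace (r * (b - a)) with (r * b + - (r * a)) by ring.
      rewrite exp_plus, exp_Ropp.
      pose proof (exp_pos (r * a)). pose proof (exp_pos (r * b)).
      field. lra.
  - unfold Rpower, softplus. rewrite !ln_exp. f_equal.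
    assert (Hsum : forall q, exp (q * a) + exp (q * b) = exp (q * a) * (1 + exp (q * (b - a)))).
    { intro q. rewrite Rmult_plus_distr_l, Rmult_1_r, <- exp_plus.
      f_equal. f_equal. ring. }
    pose proof (exp_pos (p * a)). pose proof (exp_pos (r * a)).
    pose proof (softplus_arg_pos (p * (b - a))). pose proof (softplus_arg_pos (r * (b - a))).
    rewrite !Hsum.
    assert (Hln : forall x y, 0 < x -> 0 < y -> ln (x / y) = ln x - ln y).
    { intros x y Hx Hy. unfold Rdiv. rewrite ln_mult, ln_Rinv; try lra.
      apply Rinv_0_lt_compat; lra. }
    rewrite Hln, !ln_mult, !ln_exp by nra.
    field. lra.
Qed.

(* Stability of a mean with profile f, written in log coordinates with s = 1. *)
Definition stable_profile (f : R -> R) : Prop :=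
  forall u, f u = f (f u) + f (f u + f (u - f u) - f (f u)).

Lemma stable_iff_profile p r : stable (Gini p r) <-> stable_profile (gini_profile p r).
Proof.
  set (f := gini_profile p r). split.
  - intros Hst u. specialize (Hst (exp 0) (exp u) (exp_pos _) (exp_pos _)).
    rewrite !Gini_exp in Hst. apply exp_inv in Hst.
    rewrite !Rminus_0_r, !Rplus_0_l in Hst. exact Hst.
  - intros Hf s t Hs Ht. rewrite <- (exp_ln s Hs), <- (exp_ln t Ht), !Gini_exp.
    f_equal. change (gini_profile p r) with f.
    set (a := ln s). set (u := ln t - a).
    replace (ln t) with (a + u) by (unfold u; ring).
    replace (a + u - a) with u by ring.
    replace (a + f u - a) with (f u) by ring.
    replace (a + u - (a + f u)) with (u - f u) by ring.
    replace (a + f u + f (u - f u) - (a + f (f u)))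
      with (f u + f (u - f u) - f (f u)) by ring.
    rewrite (Hf u) at 1. ring.
Qed.

Lemma stable_profile_ext f g : (forall v, f v = g v) -> stable_profile g -> stable_profile f.
Proof. intros Efg Hg u. rewrite !Efg. apply Hg. Qed.

Lemma stable_profile_reflect f : stable_profile f -> stable_profile (fun v => - f (- v)).
Proof.
  intros Hf u. cbv beta.
  replace (- (u - - f (- u))) with (- u - f (- u)) by ring.
  rewrite !Ropp_involutive.
  replace (- (- f (- u) + - f (- u - f (- u)) - - f (f (- u))))
    with (f (- u) + f (- u - f (- u)) - f (f (- u))) by ring.
  rewrite (Hf (- u)) at 1. ring.
Qed.

Lemma stable_profile_opposite_params p r :
  stable_profile (gini_profile p r) -> stable_profile (gini_profile (- p) (- r)).
Proof.
  intros Hst. apply stable_profile_ext with (fun v => - gini_profile p r (- v)).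
  - apply gini_profile_reflect.
  - apply stable_profile_reflect, Hst.
Qed.

Lemma gini_profile_opposite p v : gini_profile p (- p) v = v / 2.
Proof.
  unfold gini_profile. destruct (Req_EM_T p (- p)) as [Ep | Hp].
  - destruct (Req_EM_T p 0); [reflexivity | lra].
  - replace (- p * v) with (- (p * v)) by ring.
    rewrite softplus_reflect. field. lra.
Qed.

Lemma stable_profile_half : stable_profile (fun v => v / 2).
Proof. intros u. field. Qed.

(* The power mean B_q, q <> 0, in log coordinates: e^(q P(v)) = (1 + e^(q v)) / 2. *)
Definition power_profile (q v : R) : R := (softplus (q * v) - ln 2) / q.

Lemma exp_power_profile q v : q <> 0 -> exp (q * power_profile q v) = (1 + exp (q * v)) / 2.
Proof.
  intros Hq. unfold power_profile, softplus.
  replace (q * ((ln (1 + exp (q * v)) - ln 2) / q)) with (ln (1 + exp (q * v)) + - ln 2)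
    by (field; assumption).
  rewrite exp_plus, exp_Ropp, !exp_ln; [field | lra | apply softplus_arg_pos].
Qed.

(* Stability of B_q: after exponentiation the equation becomes a rational identity
   in e^(q u). *)
Lemma stable_power_profile q : q <> 0 -> stable_profile (power_profile q).
Proof.
  intros Hq u. set (m := power_profile q u).
  apply (Rmult_eq_reg_l q); [|assumption]. apply exp_inv.
  rewrite Rmult_plus_distr_l, exp_plus, !exp_power_profile by assumption.
  replace (q * (m + power_profile q (u - m) - power_profile q m))
    with (q * m + q * power_profile q (u - m) + - (q * power_profile q m)) by ring.
  rewrite !exp_plus, exp_Ropp, !exp_power_profile by assumption.
  replace (q * (u - m)) with (q * u + - (q * m)) by ring.
  rewrite exp_plus, exp_Ropp. unfold m. rewrite exp_power_profile by assumption.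
  pose proof (exp_pos (q * u)). field. lra.
Qed.

Lemma gini_profile_zero_param q v : q <> 0 -> gini_profile q 0 v = power_profile q v.
Proof.
  intros Hq. rewrite gini_profile_distinct by assumption.
  unfold power_profile. rewrite Rmult_0_l, softplus_0. field. assumption.
Qed.

Lemma gini_profile_power p r :
  p * r * (p + r) = 0 -> stable_profile (gini_profile p r).
Proof.
  intros H. destruct (Req_dec (p + r) 0) as [Hsum | Hsum].
  - replace r with (- p) by lra.
    apply stable_profile_ext with (fun v => v / 2);
      [apply gini_profile_opposite | apply stable_profile_half].
  - assert (Hpr : p * r = 0) by (apply Rmult_integral in H as [|]; [assumption | contradiction]).
    destruct (Rmult_integral _ _ Hpr) as [-> | ->].
    + apply stable_profile_ext with (power_profile r); [|apply stable_power_profile; lra].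
      intro v. rewrite gini_profile_sym. apply gini_profile_zero_param. lra.
    + apply stable_profile_ext with (power_profile p); [|apply stable_power_profile; lra].
      intro v. apply gini_profile_zero_param. lra.
Qed.

(* A profile of asymptotic slope a on [0, +oo) with bounded error can only be stable
   if a (1 - a) (1 - 2 a) = 0: at a large u the equation reduces, up to O(1) errors,
   to a (1 - a) (1 - 2 a) u = 0. *)
Lemma not_stable_linear_growth f a D :
  0 < a < 1 -> a <> 1/2 -> 0 <= D ->
  (forall v, 0 <= v -> -D <= f v - a * v <= D) -> ~ stable_profile f.
Proof.
  intros Ha Ha2 HD Hlin Hst.
  set (s := 1 - 2 * a).
  assert (Hs2 : 0 < s * s <= 1).
  { split; [apply (Rsqr_pos_lt s); unfold s; lra | unfold s; nra]. }
  (* Choose u with a (1 - a) (1 - 2a)^2 u = 4 D + 1, beyond the total error 4 D. *)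
  set (c := a * (1 - a) * (s * s)).
  assert (Hc : 0 < c) by (unfold c; apply Rmult_lt_0_compat; nra).
  set (u := (4 * D + 1) / c).
  assert (Hcu : c * u = 4 * D + 1) by (unfold u; field; lra).
  assert (Hu : 0 <= u) by (unfold u; apply Rlt_le, Rdiv_lt_0_compat; lra).
  assert (Hau : 4 * D + 1 <= a * (1 - a) * u).
  { assert (0 <= a * (1 - a) * u) by (apply Rmult_le_pos; nra).
    rewrite <- Hcu. unfold c.
    replace (a * (1 - a) * (s * s) * u) with (a * (1 - a) * u * (s * s)) by ring. nra. }
  set (m := f u). set (w := m + f (u - m) - f m).
  pose proof (Hst u) as Hid. fold m w in Hid.
  set (e1 := m - a * u).
  assert (H1 : -D <= e1 <= D) by apply Hlin, Hu.
  assert (Hm : 0 <= m) by (unfold e1 in H1; nra).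
  assert (Hum : 0 <= u - m) by (unfold e1 in H1; nra).
  set (e2 := f m - a * m).
  assert (H2 : -D <= e2 <= D) by apply Hlin, Hm.
  set (e3 := f (u - m) - a * (u - m)).
  assert (H3 : -D <= e3 <= D) by apply Hlin, Hum.
  assert (Hw : w = 2 * a * (1 - a) * u + s * e1 + e3 - e2)
    by (unfold w, e1, e2, e3, s; ring).
  assert (Hw0 : 0 <= w)
    by (pose proof (scaled_bound s e1 D ltac:(unfold s; lra) H1); nra).
  set (e4 := f w - a * w).
  assert (H4 : -D <= e4 <= D) by apply Hlin, Hw0.
  (* The equation at u, expressed through the four linearization errors. *)
  set (E := - (a ^ 2 + (1 - a) ^ 2) * e1 + a * e3 + (1 - a) * e2 + e4).
  assert (HE : E = a * (1 - a) * s * u).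
  { assert (Hdiff : E = a * (1 - a) * s * u + (f w + f m - m))
      by (unfold E, e4, e3, e2, e1, s, w, m; ring).
    assert (Hzero : f w + f m - m = 0) by lra.
    rewrite Hdiff, Hzero. ring. }
  assert (HEb : -(4 * D) <= E <= 4 * D).
  { pose proof (scaled_bound (- (a ^ 2 + (1 - a) ^ 2)) e1 D ltac:(nra) H1).
    pose proof (scaled_bound a e3 D ltac:(lra) H3).
    pose proof (scaled_bound (1 - a) e2 D ltac:(lra) H2).
    unfold E. lra. }
  pose proof (scaled_bound s E (4 * D) ltac:(unfold s; lra) HEb).
  assert (HcuE : c * u = s * E) by (rewrite HE; unfold c; ring).
  lra.
Qed.

Lemma tail_criterion f A B delta :
  0 < A -> 0 < B -> 0 < delta ->
  (forall u, 0 < u -> 0 < f u <= A / u) ->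
  (forall u m, 0 < u -> 0 <= m <= delta ->
     -(B * m / u) <= f (u - m) - f u <= B * m / u) ->
  forall eta, 0 < eta ->
  exists u, 0 < f u <= eta /\ -(f u / 8) <= f (u - f u) - f u <= f u / 8.
Proof.
  intros HA HB Hdelta Hdecay Hlip eta Heta.
  assert (Hquot : forall c, 0 < c -> 0 < A / c) by (intros; apply Rdiv_lt_0_compat; lra).
  set (u := 1 + A / eta + A / delta + 8 * B).
  pose proof (Hquot eta Heta). pose proof (Hquot delta Hdelta).
  assert (Hu : 0 < u) by (unfold u; lra).
  assert (Hbelow : forall c, 0 < c -> A / c <= u -> A / u <= c).
  { intros c Hc Hcu. apply Rmult_le_reg_r with u; [lra|].
    replace (A / u * u) with A by (field; lra).
    replace A with (c * (A / c)) at 1 by (field; lra). nra. }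
  exists u. destruct (Hdecay u Hu) as [Hm0 HmA].
  assert (Hmeta : f u <= eta) by (pose proof (Hbelow eta Heta ltac:(unfold u; lra)); lra).
  assert (Hmdelta : f u <= delta) by (pose proof (Hbelow delta Hdelta ltac:(unfold u; lra)); lra).
  split; [lra|].
  assert (HBm : B * f u / u <= f u / 8).
  { apply Rmult_le_reg_r with (8 * u); [lra|].
    replace (B * f u / u * (8 * u)) with (8 * B * f u) by (field; lra).
    replace (f u / 8 * (8 * u)) with (u * f u) by field.
    apply Rmult_le_compat_r; [lra | unfold u; lra]. }
  pose proof (Hlip u (f u) Hu ltac:(lra)). lra.
Qed.

(* A profile with f v = v/2 + O(v^2) near 0+ cannot be stable if it admits the
   points of [tail_criterion]: at such u, with m = f u, the equation would give
   m = f m + f w with f m ~ m/2 and w ~ 3m/2, i.e. m ~ 5m/4. *)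
Lemma not_stable_half_slope f K d :
  0 < K -> 0 < d ->
  (forall v, 0 <= v <= d -> -(K * v ^ 2) <= f v - v / 2 <= K * v ^ 2) ->
  (forall eta, 0 < eta ->
     exists u, 0 < f u <= eta /\ -(f u / 8) <= f (u - f u) - f u <= f u / 8) ->
  ~ stable_profile f.
Proof.
  intros HK Hd Hloc Htail Hst.
  set (eta := Rmin (d / 2) (1 / (80 * K))).
  assert (Heta : 0 < eta)
    by (unfold eta; apply Rmin_pos; [lra | apply Rdiv_lt_0_compat; lra]).
  destruct (Htail eta Heta) as [u [[Hm0 Hmeta] Hshift]].
  set (m := f u) in *. unfold eta in Hmeta.
  assert (Hmd : m <= d / 2) by (pose proof (Rmin_l (d / 2) (1 / (80 * K))); lra).
  assert (HKm : K * m <= 1 / 80).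
  { assert (Hm80 : m <= 1 / (80 * K)) by (pose proof (Rmin_r (d / 2) (1 / (80 * K))); lra).
    apply Rmult_le_compat_l with (r := K) in Hm80; [|lra].
    replace (K * (1 / (80 * K))) with (1 / 80) in Hm80 by (field; lra). lra. }
  assert (HKm2 : K * m ^ 2 <= m / 80) by nra.
  assert (Hfm : -(K * m ^ 2) <= f m - m / 2 <= K * m ^ 2) by (apply Hloc; lra).
  set (w := m + f (u - m) - f m).
  assert (Hwdef : w = m + f (u - m) - f m) by reflexivity.
  pose proof (Hst u) as Hid. fold m w in Hid.
  assert (Hw : m <= w <= 2 * m) by lra.
  assert (Hfw : -(K * w ^ 2) <= f w - w / 2 <= K * w ^ 2) by (apply Hloc; lra).
  assert (HKw : K * w ^ 2 <= 4 * (m / 80))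
    by (assert (w ^ 2 <= 4 * m ^ 2) by nra; nra).
  lra.
Qed.

Lemma gini_profile_mixed_linear p r v :
  0 < p -> r < 0 -> 0 <= v ->
  -(ln 2 / (p - r)) <= gini_profile p r v - p / (p - r) * v <= ln 2 / (p - r).
Proof.
  intros Hp Hr Hv. rewrite gini_profile_distinct by lra.
  replace ((softplus (p * v) - softplus (r * v)) / (p - r) - p / (p - r) * v)
    with ((softplus (p * v) - p * v - softplus (r * v)) / (p - r)) by (field; lra).
  apply div_bounds; [lra|].
  pose proof (softplus_nonneg_arg (p * v) ltac:(nra)).
  pose proof (softplus_bounds (r * v)).
  pose proof (softplus_nonpos_arg (r * v) ltac:(nra)).
  lra.
Qed.

Lemma not_stable_mixed p r :
  0 < p -> r < 0 -> p + r <> 0 -> ~ stable_profile (gini_profile p r).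
Proof.
  intros Hp Hr Hpr.
  apply (not_stable_linear_growth _ (p / (p - r)) (ln 2 / (p - r))).
  - split; [apply Rdiv_lt_0_compat; lra|].
    apply Rmult_lt_reg_r with (p - r); [lra|].
    replace (p / (p - r) * (p - r)) with p by (field; lra). lra.
  - intro Ehalf. apply Hpr.
    assert (p = 1 / 2 * (p - r)) by (rewrite <- Ehalf; field; lra). lra.
  - apply Rlt_le, Rdiv_lt_0_compat; [pose proof ln_lt_2|]; lra.
  - intros v Hv. apply gini_profile_mixed_linear; assumption.
Qed.

Section NegativeDistinct.

Variables p r : R.
Hypothesis Hrp : r < p.
Hypothesis Hp : p < 0.

Lemma gini_profile_near0 v :
  0 <= v <= 1 / - r ->
  -((p ^ 2 + r ^ 2) / (2 * (p - r)) * v ^ 2) <= gini_profile p r v - v / 2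
  <= (p ^ 2 + r ^ 2) / (2 * (p - r)) * v ^ 2.
Proof.
  intros [Hv0 Hv1].
  assert (Hrv : -1 <= r * v <= 0).
  { split; [|nra].
    apply Rmult_le_compat_l with (r := - r) in Hv1; [|lra].
    replace (- r * (1 / - r)) with 1 in Hv1 by (field; lra). lra. }
  pose proof (softplus_near0 (p * v) ltac:(nra)).
  pose proof (softplus_near0 (r * v) ltac:(lra)).
  rewrite gini_profile_distinct by lra.
  replace ((softplus (p * v) - softplus (r * v)) / (p - r) - v / 2)
    with (((softplus (p * v) - ln 2 - p * v / 2) - (softplus (r * v) - ln 2 - r * v / 2))
          / (p - r)) by (field; lra).
  replace ((p ^ 2 + r ^ 2) / (2 * (p - r)) * v ^ 2)
    with ((p ^ 2 + r ^ 2) * v ^ 2 / 2 / (p - r)) by (field; lra).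
  apply div_bounds; [lra|]. nra.
Qed.

(* Decay like 1/u, since 0 < softplus (p u) - softplus (r u) <= e^(p u). *)
Lemma gini_profile_decay u :
  0 < u -> 0 < gini_profile p r u <= 1 / (- p * (p - r)) / u.
Proof.
  intros Hu. rewrite gini_profile_distinct by lra.
  pose proof (softplus_lt (r * u) (p * u) ltac:(nra)).
  split; [apply Rdiv_lt_0_compat; lra|].
  pose proof (softplus_bounds (p * u)). pose proof (softplus_bounds (r * u)).
  pose proof (exp_decay1 (p * u) ltac:(nra)).
  apply Rmult_le_reg_r with ((p - r) * (- p * u)); [apply Rmult_lt_0_compat; nra|].
  replace (1 / (- p * (p - r)) / u * ((p - r) * (- p * u))) with 1
    by (field; repeat split; lra).
  replace ((softplus (p * u) - softplus (r * u)) / (p - r) * ((p - r) * (- p * u)))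
    with ((softplus (p * u) - softplus (r * u)) * (- p * u)) by (field; lra).
  nra.
Qed.

Lemma gini_profile_shift u m :
  0 < u -> 0 <= m <= 1 / (2 * - r) ->
  -(2 / (p - r) * m / u) <= gini_profile p r (u - m) - gini_profile p r u
  <= 2 / (p - r) * m / u.
Proof.
  intros Hu [Hm0 Hm1].
  assert (Hrm : - r * m <= 1 / 2).
  { apply Rmult_le_compat_l with (r := - r) in Hm1; [|lra].
    replace (- r * (1 / (2 * - r))) with (1 / 2) in Hm1 by (field; lra). lra. }
  assert (Hinc : forall x, r <= x <= p ->
            0 <= softplus (x * (u - m)) - softplus (x * u) <= 2 * m / u).
  { intros x Hx. replace (x * (u - m)) with (x * u + - x * m) by ring.
    pose proof (softplus_increment (x * u) (- x * m) ltac:(split; nra)).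
    pose proof (exp_rate_bound x u ltac:(lra) Hu).
    assert (2 * (- x * m) * exp (x * u) = 2 * m * (- x * exp (x * u))) by ring.
    assert (2 * m * (- x * exp (x * u)) <= 2 * m * (1 / u)) by (apply Rmult_le_compat_l; lra).
    replace (2 * m / u) with (2 * m * (1 / u)) by (field; lra). lra. }
  pose proof (Hinc p ltac:(lra)). pose proof (Hinc r ltac:(lra)).
  rewrite !gini_profile_distinct by lra.
  replace ((softplus (p * (u - m)) - softplus (r * (u - m))) / (p - r)
           - (softplus (p * u) - softplus (r * u)) / (p - r))
    with (((softplus (p * (u - m)) - softplus (p * u))
           - (softplus (r * (u - m)) - softplus (r * u))) / (p - r)) by (field; lra).
  replace (2 / (p - r) * m / u) with (2 * m / u / (p - r)) by (field; lra).
  apply div_bounds; lra.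
Qed.

Lemma not_stable_negative_distinct : ~ stable_profile (gini_profile p r).
Proof.
  apply (not_stable_half_slope _ ((p ^ 2 + r ^ 2) / (2 * (p - r))) (1 / - r)).
  - apply Rdiv_lt_0_compat; nra.
  - apply Rdiv_lt_0_compat; lra.
  - apply gini_profile_near0.
  - apply (tail_criterion _ (1 / (- p * (p - r))) (2 / (p - r)) (1 / (2 * - r))).
    + apply Rdiv_lt_0_compat; nra.
    + apply Rdiv_lt_0_compat; lra.
    + apply Rdiv_lt_0_compat; lra.
    + apply gini_profile_decay.
    + apply gini_profile_shift.
Qed.

End NegativeDistinct.

Section NegativeEqual.

Variable p : R.
Hypothesis Hp : p < 0.

Lemma gini_profile_equal_near0 v :
  0 <= v -> -(- p / 2 * v ^ 2) <= gini_profile p p v - v / 2 <= - p / 2 * v ^ 2.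
Proof.
  intros Hv. rewrite gini_profile_equal by lra.
  pose proof (logistic_nonpos (p * v) ltac:(nra)).
  replace (v * logistic (p * v) - v / 2) with (v * (logistic (p * v) - 1 / 2)) by field.
  split; nra.
Qed.

(* Decay like 1/u, since v * logistic (p v) <= v e^(p v). *)
Lemma gini_profile_equal_decay u : 0 < u -> 0 < gini_profile p p u <= 4 / p ^ 2 / u.
Proof.
  intros Hu. rewrite gini_profile_equal by lra.
  pose proof (logistic_bounds (p * u)).
  pose proof (exp_decay2 (p * u) ltac:(nra)).
  split; [nra|].
  apply Rmult_le_reg_r with (p ^ 2 * u); [apply Rmult_lt_0_compat; nra|].
  replace (4 / p ^ 2 / u * (p ^ 2 * u)) with 4 by (field; lra).
  nra.
Qed.

(* On [u - m, u] the profile changes by u * (logistic increment) - m * logistic,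
   both of size O(m/u) by [exp_decay2] and [exp_rate_bound]. *)
Lemma gini_profile_equal_shift u m :
  0 < u -> 0 <= m <= 1 / (2 * - p) ->
  -(8 / - p * m / u) <= gini_profile p p (u - m) - gini_profile p p u <= 8 / - p * m / u.
Proof.
  intros Hu [Hm0 Hm1].
  assert (Hh : 0 <= - p * m <= 1 / 2).
  { split; [nra|]. apply Rmult_le_compat_l with (r := - p) in Hm1; [|lra].
    replace (- p * (1 / (2 * - p))) with (1 / 2) in Hm1 by (field; lra). lra. }
  set (y := exp (p * u)).
  pose proof (logistic_increment (p * u) (- p * m) Hh) as Hinc.
  pose proof (logistic_bounds (p * u + - p * m)) as Hsig.
  assert (Hsig2 : exp (p * u + - p * m) <= 2 * y).
  { rewrite exp_plus. fold y.
    pose proof (exp_quadratic_upper (- p * m) ltac:(lra)).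
    assert (exp (- p * m) <= 2) by nra.
    assert (0 < y) by apply exp_pos. nra. }
  pose proof (exp_rate_bound p u ltac:(lra) Hu) as Hrate. fold y in Hrate, Hinc.
  pose proof (exp_decay2 (p * u) ltac:(nra)) as Hdecay. fold y in Hdecay.
  rewrite !gini_profile_equal by lra.
  replace (p * (u - m)) with (p * u + - p * m) by ring.
  replace ((u - m) * logistic (p * u + - p * m) - u * logistic (p * u))
    with (u * (logistic (p * u + - p * m) - logistic (p * u)) - m * logistic (p * u + - p * m))
    by ring.
  replace (8 / - p * m / u) with (8 * m / (- p * u)) by (field; lra).
  assert (Hpu : 0 < - p * u) by nra.
  assert (Hy : y * (- p * u) <= 1).
  { apply Rmult_le_compat_r with (r := u) in Hrate; [|lra].
    replace (1 / u * u) with 1 in Hrate by (field; lra). nra. }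
  set (S := logistic (p * u + - p * m) - logistic (p * u)) in *.
  set (T := logistic (p * u + - p * m)) in *.
  assert (HT : m * T * (- p * u) <= 2 * m).
  { assert (m * T <= m * (2 * y)) by (apply Rmult_le_compat_l; lra).
    assert (m * T * (- p * u) <= m * (2 * y) * (- p * u))
      by (apply Rmult_le_compat_r; lra).
    nra. }
  assert (HS : u * S * (- p * u) <= 8 * m).
  { assert (u * S <= u * (2 * (- p * m) * y)) by (apply Rmult_le_compat_l; lra).
    assert (u * S * (- p * u) <= u * (2 * (- p * m) * y) * (- p * u))
      by (apply Rmult_le_compat_r; lra).
    assert (u * (2 * (- p * m) * y) * (- p * u) = 2 * m * ((p * u) ^ 2 * y)) by ring.
    nra. }
  assert (0 <= u * S * (- p * u)) by (apply Rmult_le_pos; nra).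
  assert (0 <= m * T * (- p * u)) by (apply Rmult_le_pos; nra).
  split.
  - apply Rmult_le_reg_r with (- p * u); [lra|].
    replace (- (8 * m / (- p * u)) * (- p * u)) with (- (8 * m)) by (field; lra).
    lra.
  - apply Rmult_le_reg_r with (- p * u); [lra|].
    replace (8 * m / (- p * u) * (- p * u)) with (8 * m) by (field; lra).
    lra.
Qed.

Lemma not_stable_negative_equal : ~ stable_profile (gini_profile p p).
Proof.
  apply (not_stable_half_slope _ (- p / 2) 1); [lra | lra | |].
  - intros v [Hv _]. apply gini_profile_equal_near0, Hv.
  - apply (tail_criterion _ (4 / p ^ 2) (8 / - p) (1 / (2 * - p))).
    + apply Rdiv_lt_0_compat; nra.
    + apply Rdiv_lt_0_compat; lra.
    + apply Rdiv_lt_0_compat; lra.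
    + apply gini_profile_equal_decay.
    + apply gini_profile_equal_shift.
Qed.

End NegativeEqual.

Lemma not_stable_negative p r : p < 0 -> r < 0 -> ~ stable_profile (gini_profile p r).
Proof.
  intros Hp Hr.
  destruct (Rtotal_order r p) as [Hrp | [-> | Hpr]].
  - apply not_stable_negative_distinct; assumption.
  - apply not_stable_negative_equal, Hp.
  - intro Hst. apply (not_stable_negative_distinct r p Hpr Hr).
    apply stable_profile_ext with (gini_profile p r); [|exact Hst].
    intro v. apply gini_profile_sym.
Qed.

(* Main theorem: by the reflection (p, r) |-> (-p, -r), every unstable sign pattern
   reduces to the mixed case or the doubly negative case. *)
Theorem mainTheorem13 (p r : R) :
  stable (Gini p r) <-> p * r * (p + r) = 0.
Proof.
  split.
  - intro Hst. apply stable_iff_profile in Hst.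
    destruct (Req_dec (p * r * (p + r)) 0) as [Hzero | Hnz]; [exact Hzero | exfalso].
    assert (Hp : p <> 0) by (intros ->; apply Hnz; ring).
    assert (Hr : r <> 0) by (intros ->; apply Hnz; ring).
    assert (Hsum : p + r <> 0) by (intro E; apply Hnz; rewrite E; ring).
    pose proof (stable_profile_opposite_params p r Hst) as Hneg.
    destruct (Rlt_or_le 0 p); destruct (Rlt_or_le 0 r).
    + apply (not_stable_negative (- p) (- r)); [lra | lra | exact Hneg].
    + apply (not_stable_mixed p r); [lra | lra | exact Hsum | exact Hst].
    + apply (not_stable_mixed (- p) (- r)); [lra | lra | lra | exact Hneg].
    + apply (not_stable_negative p r); [lra | lra | exact Hst].
  - intro Hzero. apply stable_iff_profile, gini_profile_power, Hzero.
Qed.
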